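(* For all $N\in\mathbb{Z}_{\geqslant 1}$, $$\prod_{n=1}^N n!\leqslant N^{\frac12(N+1)^2}e^{-\frac34(N^2-1)}.$$ *)

From Stdlib Require Import Arith Reals Lra Lia.
Open Scope R_scope.

Fixpoint superfact (N : nat) : R :=
  match N with
  | O => 1
  | S m => superfact m * INR (fact (S m))
  end.

(** Stirling's upper bound  ln m! <= 1 + (m + 1/2) ln m - m  follows by induction from
    (m + 1/2) ln (1 + 1/m) >= 1, i.e. from  ln (1 + x) >= 2x/(2 + x).  With it, the induction
    step for the superfactorial reduces to  (N + 1)^2 ln (1 + 1/N) >= N + 3/2, which is the
    same logarithmic bound again: (N + 1)^2 * 2/(2N + 1) exceeds N + 3/2 by 1/(2(2N + 1)). *)

From Stdlib Require Import Arith Reals Lra Lia.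
From Coquelicot Require Import Coquelicot.
Open Scope R_scope.

Lemma ln_1_plus_ge_2x_over_2_plus_x (x : R) : 0 < x -> 2 * x / (2 + x) <= ln (1 + x).
Proof.
  intros Hx.
  set (f t := ln (1 + t) - 2 * t / (2 + t)).
  set (f' t := t * t / ((1 + t) * ((2 + t) * (2 + t)))).
  destruct (MVT_cor2 f f' 0 x Hx) as [c [Hmvt Hc]].
  { intros c Hc. apply is_derive_Reals. unfold f, f'.
    auto_derive; [lra | field; lra]. }
  assert (Hf0 : f 0 = 0) by (unfold f; rewrite Rplus_0_r, ln_1; field).
  assert (Hf'c : 0 <= f' c).
  { unfold f'. apply Rmult_le_pos; [nra |].
    apply Rlt_le, Rinv_0_lt_compat. apply Rmult_lt_0_compat; nra. }
  assert (0 <= f x) by nra.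
  unfold f in *. lra.
Qed.

Lemma ln_succ_minus_ln_ge (x : R) : 0 < x -> 2 / (2 * x + 1) <= ln (x + 1) - ln x.
Proof.
  intros Hx.
  pose proof (ln_1_plus_ge_2x_over_2_plus_x (/ x) (Rinv_0_lt_compat x Hx)) as Hln.
  replace (2 * / x / (2 + / x)) with (2 / (2 * x + 1)) in Hln by (field; lra).
  replace (1 + / x) with ((x + 1) * / x) in Hln by (field; lra).
  rewrite ln_mult, ln_Rinv in Hln by (try apply Rinv_0_lt_compat; lra).
  lra.
Qed.

Lemma ln_fact_le (m : nat) : (1 <= m)%nat ->
  ln (INR (fact m)) <= 1 + (INR m + 1/2) * ln (INR m) - INR m.
Proof.
  induction 1 as [| m Hm IH].
  - simpl. rewrite ln_1. lra.
  - assert (Hm1 : 1 <= INR m) by (apply (le_INR 1); exact Hm).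
    rewrite fact_simpl, mult_INR, ln_mult by (apply INR_fact_lt_0 || (apply lt_0_INR; lia)).
    rewrite S_INR.
    assert (Hstep : 1 <= (INR m + 1/2) * (ln (INR m + 1) - ln (INR m))).
    { replace 1 with ((INR m + 1/2) * (2 / (2 * INR m + 1))) at 1 by (field; lra).
      apply Rmult_le_compat_l; [lra |]. apply ln_succ_minus_ln_ge. lra. }
    lra.
Qed.

Lemma superfact_pos (N : nat) : 0 < superfact N.
Proof.
  induction N as [| N IH]; cbn [superfact].
  - lra.
  - apply Rmult_lt_0_compat; [exact IH | apply INR_fact_lt_0].
Qed.

Lemma ln_superfact_le (N : nat) : (1 <= N)%nat ->
  ln (superfact N) <= (1/2) * (INR N + 1) ^ 2 * ln (INR N) - (3/4) * (INR N ^ 2 - 1).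
Proof.
  induction 1 as [| N HN IH].
  - simpl. rewrite Rmult_1_l, ln_1. lra.
  - assert (HN1 : 1 <= INR N) by (apply (le_INR 1); exact HN).
    change (superfact (S N)) with (superfact N * INR (fact (S N))).
    rewrite ln_mult by (apply superfact_pos || apply INR_fact_lt_0).
    pose proof (ln_fact_le (S N) ltac:(lia)) as Hfact.
    rewrite S_INR in *.
    assert (Hgrowth : INR N + 3/2 <= (INR N + 1) ^ 2 * (ln (INR N + 1) - ln (INR N))).
    { apply Rle_trans with ((INR N + 1) ^ 2 * (2 / (2 * INR N + 1))).
      - apply Rmult_le_reg_r with (2 * INR N + 1); [lra |].
        replace ((INR N + 1) ^ 2 * (2 / (2 * INR N + 1)) * (2 * INR N + 1))
          with (2 * (INR N + 1) ^ 2) by (field; lra).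
        nra.
      - apply Rmult_le_compat_l; [nra |]. apply ln_succ_minus_ln_ge. lra. }
    nra.
Qed.

Theorem lemma4 (N : nat) (hN : (1 <= N)%nat) :
  superfact N <=
  Rpower (INR N) ((1/2) * (INR N + 1) ^ 2) * exp (- (3/4) * (INR N ^ 2 - 1)).
Proof.
  unfold Rpower. rewrite <- exp_plus, <- (exp_ln (superfact N)) by apply superfact_pos.
  pose proof (ln_superfact_le N hN) as Hln.
  apply Rnot_lt_le. intros Hlt. apply exp_lt_inv in Hlt. lra.
Qed.
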